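(* Let $\epsilon\ge0$ and let $\mu,\nu$ be finite positive measures on $\mathbb{R}$, absolutely continuous with respect to Lebesgue measure, with $\mu(\mathbb{R})=\nu(\mathbb{R})=U$. Let $F(x)=\mu((-\infty,x])$, $G(x)=\nu((-\infty,x])$, and $F^{-1}(t)=\inf\{x\in\mathbb{R}:F(x)\ge t\}$, $G^{-1}(t)=\inf\{x:G(x)\ge t\}$ for $t\in(0,U)$. Then $D_\epsilon(\mu,\nu)=0$ if and only if $\sup_{t\in(0,U)}|F^{-1}(t)-G^{-1}(t)|\le 2\epsilon$.
   Context: $D_\epsilon(\mu,\nu)=\inf_\pi\pi\big(\{(x,x'):|x-x'|>2\epsilon\}\big)$, the infimum over measures $\pi$ on $\mathbb{R}\times\mathbb{R}$ with marginals $\mu$ and $\nu$. *)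

From HB Require Import structures.
From mathcomp Require Import all_boot all_order all_algebra.
From mathcomp Require Import all_classical all_reals all_analysis.
Set Implicit Arguments. Unset Strict Implicit. Unset Printing Implicit Defensive.
Import Order.TTheory GRing.Theory Num.Theory.
Local Open Scope classical_set_scope.
Local Open Scope ring_scope.

Definition coupling (R : realType)
  (mu nu : set R -> \bar R) (pi : {measure set (R * R)%type -> \bar R}) : Prop :=
  (forall A : set R, measurable A -> pi (A `*` setT) = mu A) /\
  (forall A : set R, measurable A -> pi (setT `*` A) = nu A).

Definition D_eps (R : realType) (eps : R) (mu nu : set R -> \bar R) : \bar R :=
  ereal_inf [set pi [set p : R * R | 2 * eps < `|p.1 - p.2|]
            | pi in [set pi : {measure set (R * R)%type -> \bar R} | coupling mu nu pi]].

Definition cdf (R : realType) (mu : set R -> \bar R) (x : R) : R :=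
  fine (mu [set` `]-oo, x]]).

Definition cdf_inv (R : realType) (mu : set R -> \bar R) (t : R) : R :=
  inf [set x : R | t <= cdf mu x].

(* If the quantile functions stay within 2 eps of each other, pushing the
   Lebesgue measure of ]0, U[ forward along t |-> (F^-1 t, G^-1 t) yields a
   coupling (its marginals are mu and nu by the Galois connection
   F^-1 t <= a <-> t <= F a) carried by {|x - x'| <= 2 eps}.  Conversely,
   {x' <= a} is contained in {x <= a + 2 eps} \/ {|x - x'| > 2 eps}, so every
   coupling gives the far set mass at least G a - F (a + 2 eps), and
   symmetrically F a - G (a + 2 eps).  Hence D_eps = 0 forces
   G a <= F (a + 2 eps) and F a <= G (a + 2 eps), which the Galois connection
   turns into |F^-1 t - G^-1 t| <= 2 eps. *)

From Pilot Require Import Defs.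
From HB Require Import structures.
From mathcomp Require Import all_boot all_order all_algebra.
From mathcomp Require Import all_classical all_reals all_analysis.
From mathcomp Require Import lra measurable_realfun.
Import Order.TTheory GRing.Theory Num.Theory numFieldTopology.Exports.
Local Open Scope classical_set_scope.
Local Open Scope ring_scope.

(* [random_variable] also defines a [cdf]; ours is the one of [Defs]. *)
Import Defs.

Section cdf_finite_measure.
Context (R : realType) (mu : {finite_measure set R -> \bar R}) (U : R).
Hypothesis muU : mu setT = U%:E.

Lemma cdfE x : mu `]-oo, x]%classic = (cdf mu x)%:E.
Proof. by rewrite /cdf fineK// fin_num_measure. Qed.

Lemma cdf_ge0 x : 0 <= cdf mu x.
Proof. by rewrite -lee_fin -cdfE. Qed.

Lemma cdf_le_mass x : cdf mu x <= U.
Proof. by rewrite -lee_fin -cdfE -muU le_measure ?inE. Qed.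

Lemma cdf_nondecreasing : nondecreasing_fun (cdf mu).
Proof.
by move=> x y xy; rewrite -lee_fin -!cdfE le_measure ?inE//; exact: subset_itvl.
Qed.

Lemma le_cdf_right_limit x t :
  (forall n, t <= cdf mu (x + n.+1%:R^-1)) -> t <= cdf mu x.
Proof.
move=> tle; rewrite -lee_fin -cdfE (itvNycEbigcap false).
apply: cvge_to_ge (nonincreasing_cvg_mu _ _ _ _) _ => //.
- by rewrite -ge0_fin_numE// fin_num_measure.
- exact: bigcap_measurable.
- move=> m n mn; apply/subsetPset/subset_itvl.
  by rewrite bnd_simp lerD2l lef_pV2 ?posrE// ler_nat.
- by apply: nearW => n /=; rewrite cdfE lee_fin.
Qed.

Lemma exists_cdf_ge t : t < U -> exists x, t <= cdf mu x.
Proof.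
move=> tU; apply: contrapT => /forallNP cdf_lt.
suff : (U%:E <= t%:E)%E by rewrite lee_fin leNgt tU.
rewrite -muU -(bigcup_itvT false false).
apply: cvge_to_le (nondecreasing_cvg_mu _ _ _) _ => //.
- exact: bigcup_measurable.
- move=> m n mn; apply/subsetPset/subset_itv; rewrite bnd_simp ?lerN2 ler_nat//.
- apply: nearW => n /=; rewrite (@le_trans _ _ (mu `]-oo, n%:R]%classic))//.
    by rewrite le_measure ?inE//; apply: subset_itvr.
  by rewrite cdfE lee_fin ltW// ltNge; apply/negP.
Qed.

Lemma exists_cdf_lt t : 0 < t -> exists x, cdf mu x < t.
Proof.
move=> t0; apply: contrapT => /forallNP cdf_ge.
suff : (t%:E <= 0)%E by rewrite leNgt lte_fin t0.
have -> : 0%E = mu (\bigcap_n `]-oo, - n%:R]%classic).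
  rewrite -(measure0 mu); congr (mu _); apply/esym/seteqP; split => // x /=.
  move=> /(_ (Num.truncn (- x)).+1 Logic.I); rewrite /= in_itv /= leNgt => /negP.
  by apply; rewrite ltrNl truncnS_gt.
apply: cvge_to_ge (nonincreasing_cvg_mu _ _ _ _) _ => //.
- by rewrite -ge0_fin_numE// fin_num_measure.
- exact: bigcap_measurable.
- move=> m n mn; apply/subsetPset/subset_itvl; rewrite bnd_simp lerN2 ler_nat//.
- by apply: nearW => n /=; rewrite cdfE lee_fin leNgt; apply/negP.
Qed.

Lemma cdf_inv_le t x : 0 < t < U -> cdf_inv mu t <= x <-> t <= cdf mu x.
Proof.
case/andP => t0 tU.
have [x0 tx0] := exists_cdf_ge _ tU.
have [x1 x1t] := exists_cdf_lt _ t0.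
have lb : has_lbound [set x | t <= cdf mu x].
  exists x1 => y /= ty; rewrite leNgt; apply/negP => /ltW/cdf_nondecreasing.
  by move/(le_trans ty)/(lt_le_trans x1t); rewrite ltxx.
split => [tx|]; last exact: ge_inf.
apply: le_cdf_right_limit => n.
have /(inf_lt (ex_intro _ x0 tx0)) [y /= ty yx] : cdf_inv mu t < x + n.+1%:R^-1.
  by apply: le_lt_trans tx _; rewrite ltrDl invr_gt0.
exact/(le_trans ty)/cdf_nondecreasing/ltW.
Qed.

Lemma cdf_inv_nondecreasing :
  {in `]0, U[%classic &, {homo cdf_inv mu : s t / s <= t}}.
Proof.
move=> s t; rewrite !inE /= !in_itv /= => s0U t0U st.
apply/(cdf_inv_le _ _ s0U)/(le_trans st).
by apply/(cdf_inv_le _ _ t0U).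
Qed.
End cdf_finite_measure.

Arguments cdf_inv_le {R mu U} muU {t x}.
Arguments cdf_inv_nondecreasing {R mu U} muU.

Lemma itvNyI (R : realType) (a b : R) :
  `]-oo, a]%classic `&` `]-oo, b]%classic = `]-oo, Order.min a b]%classic.
Proof. by apply/seteqP; split => x /=; rewrite !in_itv /= le_min => /andP. Qed.

Lemma finite_measure_eq_itvNy (R : realType)
    (m1 : {finite_measure set R -> \bar R}) (m2 : {measure set R -> \bar R}) :
  (forall x, m1 `]-oo, x]%classic = m2 `]-oo, x]%classic) ->
  forall A, measurable A -> m1 A = m2 A.
Proof.
move=> m12 A mA.
apply: (@measure_unique _ R R (@ocitv R) (fun n => `]- n%:R, n%:R]%classic) erefl
  (@ocitvI R) _ _ m1 m2) mA.
- by move=> n; exists (- n%:R, n%:R).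
- exact: bigcup_itvT.
- move=> _ [[a b] _ <-]; rewrite /=.
  have -> : `]a, b]%classic = `]-oo, b]%classic `\` `]-oo, a]%classic :> set R.
    apply/seteqP; split => x /=; rewrite !in_itv /=.
      by case/andP => ax ->; rewrite leNgt ax.
    by case=> -> /negP; rewrite -ltNge => ->.
  rewrite !measureD// ?itvNyI; first by congr (_ - _)%E; apply: m12.
  + by rewrite -[X in (X < _)%E](m12 b) -ge0_fin_numE// fin_num_measure.
  + by rewrite -ge0_fin_numE// fin_num_measure.
- by move=> n; rewrite -ge0_fin_numE// fin_num_measure.
Qed.

Lemma nondecreasing_in_measurable (R : realType) (D : set R) (f : R -> R) :
  measurable D -> is_interval D -> {in D &, {homo f : x y / x <= y}} ->
  measurable_fun D f.
Proof.
move=> mD iD f_nd.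
apply: (measurability (@RGenCInfty.G R)) => [|/= _ [_] [r] -> <-].
  exact: RGenCInfty.measurableE.
apply: is_interval_measurable => s t [Ds fs] [Dt ft] u /andP[su ut].
have Du : D u by apply: (iD s t) => //; rewrite su ut.
split => //; move: fs; rewrite /= !in_itv /= !andbT => fs.
by rewrite (le_trans fs)// f_nd ?inE.
Qed.

Lemma measurable_dist_gt d (T : measurableType d) (R : realType) (p q : T -> R) c :
  measurable_fun setT p -> measurable_fun setT q ->
  measurable [set z | c < `|p z - q z|].
Proof.
move=> mp mq.
have mf : measurable_fun setT (fun z => `|p z - q z|).
  exact/measurableT_comp/measurable_funB.
have -> : [set z | c < `|p z - q z|] = (fun z => `|p z - q z|) @^-1` `]c, +oo[.
  by apply/seteqP; split => z /=; rewrite in_itv /= andbT.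
by rewrite -[X in measurable X]setTI; exact: mf.
Qed.

Section far_mass.
Context d (T : measurableType d) (R : realType) (pi : {measure set T -> \bar R}).
Context (m1 m2 : {finite_measure set R -> \bar R}) (p q : T -> R).
Hypotheses (mp : measurable_fun setT p) (mq : measurable_fun setT q).
Hypothesis pi_p : forall A, measurable A -> pi (p @^-1` A) = m1 A.
Hypothesis pi_q : forall A, measurable A -> pi (q @^-1` A) = m2 A.

Lemma far_mass_ge a b c : a + c <= b ->
  ((cdf m2 a - cdf m1 b)%:E <= pi [set z | c < `|p z - q z|]%R)%E.
Proof.
move=> acb.
set A := q @^-1` `]-oo, a]%classic; set B := p @^-1` `]-oo, b]%classic.
have mA : measurable A by rewrite -[A]setTI; exact: mq.
have mB : measurable B by rewrite -[B]setTI; exact: mp.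
have AB_far : A `\` B `<=` [set z | c < `|p z - q z|].
  move=> z []; rewrite /A /B /preimage /= !in_itv /= => qa /negP; rewrite -ltNge => bp.
  apply: lt_le_trans (ler_norm _); lra.
rewrite EFinB -cdfE -pi_q// -cdfE -pi_p// leeBlDr.
  have mAB : measurable (A `\` B) by exact: measurableD.
  apply: (@le_trans _ _ (pi ((A `\` B) `|` B))).
    rewrite le_measure ?inE//; first exact: measurableU.
    by move=> z Az; have [Bz|nBz] := pselect (B z); [right|left].
  apply: le_trans (measureU2 pi mAB mB) _.
  by rewrite leeD2r// le_measure ?inE//; exact: measurable_dist_gt.
by rewrite pi_p// fin_num_measure.
Qed.
End far_mass.

Section couplings.
Context (R : realType) (mu nu : {finite_measure set R -> \bar R}).

Lemma coupling_far_mass_ge (pi : {measure set (R * R)%type -> \bar R}) x c :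
  coupling mu nu pi ->
  ((cdf nu x - cdf mu (x + c))%:E <= pi [set p | c < `|p.1 - p.2|]%R)%E /\
  ((cdf mu x - cdf nu (x + c))%:E <= pi [set p | c < `|p.1 - p.2|]%R)%E.
Proof.
case=> pi_fst pi_snd.
have {}pi_fst A : measurable A -> pi (fst @^-1` A) = mu A.
  by rewrite -setXT; exact: pi_fst.
have {}pi_snd A : measurable A -> pi (snd @^-1` A) = nu A.
  by rewrite -setTX; exact: pi_snd.
split; first exact: far_mass_ge.
under eq_set do rewrite distrC.
exact: far_mass_ge.
Qed.

Lemma D_eps_eq0_cdf_le eps : D_eps eps mu nu = 0%E -> forall x,
  cdf nu x <= cdf mu (x + 2 * eps) /\ cdf mu x <= cdf nu (x + 2 * eps).
Proof.
move=> D0 x.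
have le0 d : (forall pi, coupling mu nu pi ->
    (d%:E <= pi [set p | 2 * eps < `|p.1 - p.2|]%R)%E) -> d <= 0.
  move=> d_le; suff : (d%:E <= D_eps eps mu nu)%E by rewrite D0 lee_fin.
  by apply: le_ereal_inf_tmp => _ [pi pi_cpl <-]; exact: d_le.
by split; rewrite -subr_le0; apply: le0 => pi /(coupling_far_mass_ge _ x (2 * eps))[].
Qed.

Lemma D_eps_eq0_coupling eps (pi : {measure set (R * R)%type -> \bar R}) :
  coupling mu nu pi -> pi [set p | 2 * eps < `|p.1 - p.2|] = 0%E ->
  D_eps eps mu nu = 0%E.
Proof.
move=> pi_cpl pi0; apply/le_anti/andP; split.
  by rewrite -pi0; apply: ereal_inf_lbound; exists pi.
by apply: le_ereal_inf_tmp => _ [pi' _ <-]; exact: measure_ge0.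
Qed.

End couplings.

Arguments D_eps_eq0_cdf_le {R mu nu eps}.

Lemma cdf_inv_le_shift {R : realType} {m1 m2 : {finite_measure set R -> \bar R}}
    {U c : R} :
  m1 setT = U%:E -> m2 setT = U%:E -> (forall x, cdf m2 x <= cdf m1 (x + c)) ->
  forall t, 0 < t < U -> cdf_inv m1 t <= cdf_inv m2 t + c.
Proof.
move=> m1U m2U le12 t tU; apply/(cdf_inv_le m1U tU)/(le_trans _ (le12 _)).
exact/(cdf_inv_le m2U tU).
Qed.

Section quantile_transform.
Context (R : realType) (U : R).

(* Outside ]0, U[ the infimum defining [cdf_inv] is junk; [quantile] is 0 there. *)
Definition quantile (mu : set R -> \bar R) : R -> R :=
  cdf_inv mu \_ (`]0, U[%classic : set R).

Definition lebesgue_0U : {measure set (measurableTypeR R) -> \bar R} :=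
  mrestr lebesgue_measure (measurable_itv `]0, U[).

Lemma lebesgue_0U_itvNy c : 0 <= c <= U -> lebesgue_0U `]-oo, c]%classic = c%:E.
Proof.
case/andP => c0 cU; rewrite /lebesgue_0U /= /mrestr.
have [cltU|] := ltP c U.
  have -> : `]-oo, c] `&` `]0, U[ = `]0, c]%classic :> set R.
    apply/seteqP; split => t /=; rewrite !in_itv /=.
      by case=> tc /andP[-> _].
    by case/andP => t0 tc; rewrite tc t0 (le_lt_trans tc).
  rewrite lebesgue_measure_itv /= lte_fin oppr0 adde0.
  by case: ltgtP c0 => // <-.
move=> Uc; have {Uc cU} cU : c = U by apply/le_anti; rewrite cU.
rewrite cU in c0 *.
have -> : `]-oo, U] `&` `]0, U[ = `]0, U[%classic :> set R.
  apply/seteqP; split => t /=; rewrite !in_itv /=; first by case.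
  by case/andP => -> tU; rewrite (ltW tU) tU.
rewrite lebesgue_measure_itv /= lte_fin oppr0 adde0.
by case: ltgtP c0 => // <-.
Qed.

Lemma quantileE mu t : 0 < t < U -> quantile mu t = cdf_inv mu t.
Proof. by move=> tU; rewrite /quantile patchE mem_set//= in_itv. Qed.

Variables (mu : {finite_measure set R -> \bar R}) (muU : mu setT = U%:E).

Lemma measurable_quantile : measurable_fun setT (quantile mu).
Proof.
apply/(measurable_restrictT _ (measurable_itv `]0, U[)).
apply: nondecreasing_in_measurable => //; first exact: interval_is_interval.
exact: cdf_inv_nondecreasing muU.
Qed.

Lemma quantile_preimage_itvNy x :
  quantile mu @^-1` `]-oo, x] `&` `]0, U[ = `]-oo, cdf mu x] `&` `]0, U[.
Proof.
apply/seteqP; split => t [] /=; rewrite !in_itv /= => tx tU.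
  by split; rewrite ?in_itv//; apply/(cdf_inv_le muU tU); rewrite -quantileE.
by split; rewrite ?in_itv// quantileE//; apply/(cdf_inv_le muU tU).
Qed.

Lemma lebesgue_0U_quantile A : measurable A ->
  lebesgue_0U (quantile mu @^-1` A) = mu A.
Proof.
move=> mA; apply/esym.
apply: (@finite_measure_eq_itvNy R mu (pushforward lebesgue_0U (quantile mu)))
  => // [|mq x].
  exact: measurable_quantile.
rewrite [X in X = _]cdfE -lebesgue_0U_itvNy; last by rewrite cdf_ge0 cdf_le_mass.
by rewrite /lebesgue_0U /= /pushforward /= /mrestr quantile_preimage_itvNy.
Qed.

End quantile_transform.

Arguments quantile {R} U mu.
Arguments lebesgue_0U {R} U.
Arguments measurable_quantile {R U mu} muU.
Arguments lebesgue_0U_quantile {R U mu} muU {A}.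

Lemma D_eps_eq0_quantile (R : realType) (mu nu : {finite_measure set R -> \bar R})
    U eps :
  mu setT = U%:E -> nu setT = U%:E ->
  (forall t, 0 < t < U -> `|cdf_inv mu t - cdf_inv nu t| <= 2 * eps) ->
  D_eps eps mu nu = 0%E.
Proof.
move=> muU nuU close.
pose h t := (quantile U mu t, quantile U nu t).
have mh : measurable_fun setT h.
  exact: measurable_fun_pair (measurable_quantile muU) (measurable_quantile nuU).
apply: (@D_eps_eq0_coupling _ _ _ _ (pushforward (lebesgue_0U U) h)).
  split => A mA; rewrite /pushforward.
    rewrite -(lebesgue_0U_quantile muU mA); congr (lebesgue_0U U _).
    by apply/seteqP; split => t /=; [case|].
  rewrite -(lebesgue_0U_quantile nuU mA); congr (lebesgue_0U U _).
  by apply/seteqP; split => t /=; [case|].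
rewrite /lebesgue_0U /= /pushforward /= /mrestr.
suff -> : h @^-1` [set p | 2 * eps < `|p.1 - p.2|] `&` `]0, U[ = set0 by [].
apply/seteqP; split => t //= [+ tU]; rewrite in_itv /= in tU.
by rewrite /h /= !quantileE// ltNge close.
Qed.

Theorem theorem6 (R : realType) (eps U : R) (heps : 0 <= eps)
  (mu nu : {finite_measure set R -> \bar R})
  (hmu : mu `<< (@lebesgue_measure R)) (hnu : nu `<< (@lebesgue_measure R))
  (hmuU : mu setT = U%:E) (hnuU : nu setT = U%:E) :
  D_eps eps mu nu = 0%E <->
  (forall t : R, 0 < t < U -> `|cdf_inv mu t - cdf_inv nu t| <= 2 * eps).
Proof.
split => [D0 t tU | close]; last exact: D_eps_eq0_quantile hmuU hnuU close.
have cdf_le x := D_eps_eq0_cdf_le D0 x.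
rewrite ler_distl; apply/andP; split.
  by rewrite lerBlDr; apply: cdf_inv_le_shift hnuU hmuU (fun x => (cdf_le x).2) t tU.
exact: cdf_inv_le_shift hmuU hnuU (fun x => (cdf_le x).1) t tU.
Qed.
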